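(* Let $n\ge 2$, $N=\{1,\dots,n\}$, for each $i\in N$ let $A_i$ be a nonempty finite set, $A=\prod_{i\in N}A_i$, and let $u_i:A\to\mathbb{R}$ for $i\in N$. Then: (1) for any $\delta,\delta'$ with $0<\delta<\delta'\le 1$ and any $T\in\mathbb{N}$, $F(\delta',T)\subseteq F(\delta,T)$; (2) for any $\delta\in(0,1]$ and any $T\in\mathbb{N}$, $F(\delta,T)\subseteq F(\delta,T+1)$.
   Context: For $\delta\in(0,1]$, $T\in\mathbb{N}$ and $a^{[nT]}=(a^1,\dots,a^{nT})\in A^{nT}$, extend indices periodically by $a^s=a^{s-nT}$ for $s\ge nT+1$, and define for $i\in N$ $$U_i(a^{[nT]})=\frac{1}{\sum_{k=1}^{nT}\delta^{k-1}}\sum_{k=1}^{nT}\delta^{k-1}u_i\big(a^{(i-1)T+k}\big),$$ $U(a^{[nT]})=(U_i(a^{[nT]}))_{i\in N}$, and $F(\delta,T)=\operatorname{co}\left(\bigcup_{a^{[nT]}\in A^{nT}}\{U(a^{[nT]})\}\right)\subseteq\mathbb{R}^n$, where $\operatorname{co}$ denotes convex hull. *)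

From HB Require Import structures.
From mathcomp Require Import all_boot all_order all_algebra.
From mathcomp Require Import reals.
Set Implicit Arguments. Unset Strict Implicit. Unset Printing Implicit Defensive.
Import Order.TTheory GRing.Theory Num.Theory.
Local Open Scope ring_scope.

Lemma ord_pos (m : nat) (k : 'I_m) : (0 < m)%N.
Proof. exact: leq_ltn_trans (leq0n k) (ltn_ord k). Qed.

(* Periodic indexing: the 0-based position j taken modulo m
   (a^s = a^{s-m} for s > m, in 1-based notation). *)
Definition per_idx (m : nat) (k : 'I_m) (j : nat) : 'I_m :=
  Ordinal (ltn_pmod j (ord_pos k)).

Definition conv_hull (R : realType) (n : nat) (S : 'rV[R]_n -> Prop)
  (x : 'rV[R]_n) : Prop :=
  exists (m : nat) (w : 'I_m -> R) (p : 'I_m -> 'rV[R]_n),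
    [/\ (forall j, 0 <= w j), \sum_j w j = 1, (forall j, S (p j))
      & x = \sum_j w j *: p j].

(* Players are 'I_n (player i+1 of the paper is i : 'I_n); action profiles are
   dependent functions [forall i, Ai i]; a sequence a^{[nT]} is a function
   'I_(n*T) -> profile (position k0 : 'I_(n*T) is the paper's index k0+1).
   U_i(a) = (sum_{k<nT} delta^k u_i(a^{(i T + k) mod nT})) / sum_{k<nT} delta^k
   (0-based, equivalent to the paper's 1-based formula). *)
Definition U (R : realType) (n T : nat) (Ai : 'I_n -> finType)
  (u : 'I_n -> (forall i, Ai i) -> R) (delta : R)
  (a : 'I_(n * T) -> forall i, Ai i) : 'rV[R]_n :=
  \row_i ((\sum_(k < n * T) delta ^+ k * u i (a (per_idx k (i * T + k)%N)))
          / (\sum_(k < n * T) delta ^+ k)).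

Definition F (R : realType) (n : nat) (Ai : 'I_n -> finType)
  (u : 'I_n -> (forall i, Ai i) -> R) (delta : R) (T : nat) : 'rV[R]_n -> Prop :=
  conv_hull (fun x => exists a : 'I_(n * T) -> forall i, Ai i, x = U u delta a).

From HB Require Import structures.
From mathcomp Require Import all_boot all_order all_algebra.
From mathcomp Require Import reals.
From mathcomp Require Import zify ring.
Import Order.TTheory GRing.Theory Num.Theory.
Local Open Scope ring_scope.
Set Implicit Arguments. Unset Strict Implicit. Unset Printing Implicit Defensive.

(* Let f_j be player i's stage payoff at position j of the nT-periodic play
   starting at her first stage, and V_r = sum_(k<m) x^k f_(r + k s) a discounted
   sum of stride s.  Then V_r - x V_(r+s) = (1 - x^m) f_r, and summing this against
   weights h_r and shifting the index cyclically by s expresses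
   (1 - x^m) sum_r h_r f_r as sum_r (h_r - x h_(r-s)) V_r.
   (1) With s = 1, x = delta and h_r = delta'^r, V_r is proportional to player
   i's payoff in the play shifted cyclically by r, and the weights are
   nonnegative: U(delta') is a convex combination of the U(delta) of the shifts.
   (2) With s = T, x = delta^(T+1) and h_r = delta^r, V_e is proportional to
   player i's payoff in the play of length n(T+1) whose q-th block of length T+1
   repeats a^(e+qT); again the weights are nonnegative, and for delta = 1, where
   they vanish, uniform weights work instead. *)

Lemma conv_hull_sum (R : realType) n (S : 'rV[R]_n -> Prop) (I : finType)
    (w : I -> R) (p : I -> 'rV[R]_n) :
  (forall i, 0 <= w i) -> \sum_i w i = 1 -> (forall i, S (p i)) ->
  conv_hull S (\sum_i w i *: p i).
Proof.
move=> w0 w1 Sp; exists #|I|, (fun j => w (enum_val j)), (fun j => p (enum_val j)).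
have reidx (V : nmodType) (F : I -> V) : \sum_i F i = \sum_(j < #|I|) F (enum_val j).
  exact: (reindex _ (onW_bij _ (enum_val_bij I))).
split=> //; [by rewrite -w1 reidx | exact: reidx].
Qed.

Lemma conv_hull_weights (R : realType) n (S : 'rV[R]_n -> Prop) (I : finType)
    (c : I -> R) (p : I -> 'rV[R]_n) (x : 'rV[R]_n) :
  (forall e, 0 <= c e) -> 0 < \sum_e c e -> (forall e, S (p e)) ->
  (forall i, \sum_e c e * p e 0 i = (\sum_e c e) * x 0 i) -> conv_hull S x.
Proof.
move=> c0 c_gt0 Sp px.
have -> : x = \sum_e (c e / \sum_e c e) *: p e.
  apply/rowP => i; rewrite summxE.
  under eq_bigr do rewrite mxE mulrAC.
  by rewrite -mulr_suml px mulrC mulKf ?gt_eqF.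
apply: conv_hull_sum => // [e|].
  exact: divr_ge0 (c0 e) (ltW c_gt0).
by rewrite -mulr_suml mulfV ?gt_eqF.
Qed.

Lemma conv_hull_sub (R : realType) n (S S' : 'rV[R]_n -> Prop) :
  (forall y, S y -> conv_hull S' y) -> forall x, conv_hull S x -> conv_hull S' x.
Proof.
move=> SS' _ [m [w [p [w0 w1 Sp ->]]]].
pose comb := {k : nat & (('I_k -> R) * ('I_k -> 'rV[R]_n))%type}.
have /fin_all_exists [t ht] : forall j : 'I_m, exists t : comb,
    [/\ forall r, 0 <= (tagged t).1 r, \sum_r (tagged t).1 r = 1,
        forall r, S' ((tagged t).2 r)
      & p j = \sum_r (tagged t).1 r *: (tagged t).2 r].
  move=> j; have [k [w' [p' hp']]] := SS' _ (Sp j).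
  by exists (Tagged (fun k => (('I_k -> R) * ('I_k -> 'rV[R]_n))%type) (w', p')).
pose I := {j : 'I_m & 'I_(tag (t j))}.
have -> : \sum_j w j *: p j =
    \sum_(q : I) (w (tag q) * (tagged (t (tag q))).1 (tagged q))
                 *: (tagged (t (tag q))).2 (tagged q).
  rewrite -(sig_big_dep xpredT (fun _ => xpredT)
     (fun j r => (w j * (tagged (t j)).1 r) *: (tagged (t j)).2 r)) /=.
  apply: eq_bigr => j _; have [_ _ _ ->] := ht j.
  by rewrite scaler_sumr; apply: eq_bigr => r _; rewrite scalerA.
apply: conv_hull_sum => [q|| q].
- by have [? _ _ _] := ht (tag q); apply: mulr_ge0.
- rewrite -(sig_big_dep xpredT (fun _ => xpredT)
     (fun j r => w j * (tagged (t j)).1 r)) /= -w1.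
  by apply: eq_bigr => j _; have [_ h1 _ _] := ht j; rewrite -mulr_sumr h1 mulr1.
- by have [_ _ ? _] := ht (tag q).
Qed.

Lemma sum_periodic_shift (V : nmodType) (m c : nat) (G : nat -> V) :
  (forall j, G (j + m)%N = G j) -> \sum_(k < m) G (c + k)%N = \sum_(k < m) G k.
Proof.
move=> Gm; elim: c => [|c <-]; first by apply: eq_bigr => k _; rewrite add0n.
case: m Gm => [|m] Gm; first by rewrite !big_ord0.
rewrite big_ord_recr big_ord_recl /= addn0 addSnnS Gm addrC.
by congr (_ + _); apply: eq_bigr => k _; rewrite addSnnS.
Qed.

(* [(j + M - s) %% M] is [j - s] modulo [M], avoiding truncated subtraction. *)
Definition cyc_diff (R : pzRingType) (x : R) (M s : nat) (h : nat -> R) (j : nat) : R :=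
  h j - x * h ((j + M - s) %% M)%N.

Lemma sum_cyclic_by_parts (R : comPzRingType) (x : R) (M s : nat) (h V : nat -> R) :
  (s <= M)%N -> (forall j, V (j + M)%N = V j) ->
  \sum_(j < M) h j * (V j - x * V (j + s)%N) = \sum_(j < M) cyc_diff x M s h j * V j.
Proof.
move=> sM VM.
have shift : \sum_(j < M) h j * V (j + s)%N = \sum_(j < M) h ((j + M - s) %% M)%N * V j.
  rewrite -(@sum_periodic_shift _ M s (fun j => h ((j + M - s) %% M)%N * V j)).
    apply: eq_bigr => j _; rewrite addnC.
    have -> : (s + j + M - s = j + M)%N by lia.
    by rewrite modnDr modn_small.
  move=> j; rewrite VM; congr (h _ * _).
  have -> : (j + M + M - s = j + M - s + M)%N by lia.
  by rewrite modnDr.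
under eq_bigr do rewrite mulrBr mulrCA.
rewrite sumrB -mulr_sumr shift mulr_sumr -sumrB.
by apply: eq_bigr => j _; rewrite /cyc_diff; ring.
Qed.

Definition disc_sum (R : pzSemiRingType) (x : R) (m s : nat) (g : nat -> R) (j : nat) : R :=
  \sum_(k < m) x ^+ k * g (j + k * s)%N.

Lemma disc_sum_rec (R : pzRingType) (x : R) (m s : nat) (g : nat -> R) (j : nat) :
  (forall j, g (j + m * s)%N = g j) ->
  disc_sum x m s g j - x * disc_sum x m s g (j + s) = (1 - x ^+ m) * g j.
Proof.
rewrite /disc_sum; case: m => [|m] gp.
  by rewrite !big_ord0 mulr0 expr0 !subrr mul0r.
rewrite big_ord_recl big_ord_recr /= expr0 mul0n addn0 mul1r mulrDr mulr_sumr.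
rewrite -addnA -mulSn gp mulrA -exprS.
under [X in _ - (X + _)]eq_bigr do rewrite mulrA -exprS -addnA -mulSn.
by rewrite opprD addrA addrK mulrBl mul1r.
Qed.

Lemma sum_disc_sum_by_parts (R : comPzRingType) (x : R) (m s : nat) (g h : nat -> R) :
  (0 < m)%N -> (forall j, g (j + m * s)%N = g j) ->
  \sum_(j < m * s) cyc_diff x (m * s) s h j * disc_sum x m s g j
  = (1 - x ^+ m) * \sum_(j < m * s) h j * g j.
Proof.
move=> m0 gp; rewrite -sum_cyclic_by_parts ?leq_pmull // => [|j].
  by rewrite mulr_sumr; apply: eq_bigr => j _; rewrite disc_sum_rec // mulrCA.
by apply: eq_bigr => k _; rewrite addnAC gp.
Qed.

Lemma sum_disc_sum (R : comPzSemiRingType) (x : R) (m s : nat) (g : nat -> R) :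
  (forall j, g (j + m * s)%N = g j) ->
  \sum_(e < m * s) disc_sum x m s g e = (\sum_(k < m) x ^+ k) * \sum_(e < m * s) g e.
Proof.
move=> gp; rewrite exchange_big mulr_suml; apply: eq_bigr => k _.
by rewrite -mulr_sumr; under eq_bigr do rewrite addnC; rewrite sum_periodic_shift.
Qed.

Lemma disc_sum1 (R : pzSemiRingType) (x : R) (m s j : nat) :
  disc_sum x m s (fun _ => 1) j = \sum_(k < m) x ^+ k.
Proof. by apply: eq_bigr => k _; rewrite mulr1. Qed.

Lemma sum_ord_mul (V : nmodType) (m p : nat) (G : nat -> V) :
  \sum_(k < m * p) G k = \sum_(q < m) \sum_(r < p) G (q * p + r)%N.
Proof.
elim: m => [|m IHm]; first by rewrite mul0n !big_ord0.
by rewrite mulSnr big_split_ord /= IHm big_ord_recr.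
Qed.

Lemma sum_expr_gt0 (R : numDomainType) (x : R) (m : nat) :
  0 < x -> (0 < m)%N -> 0 < \sum_(k < m) x ^+ k.
Proof.
move=> x_gt0; case: m => // m _; rewrite big_ord_recl expr0 ltr_pwDl //.
by apply: sumr_ge0 => k _; rewrite exprn_ge0 // ltW.
Qed.

Lemma per_idx_val (m : nat) (k : 'I_m) (j : nat) : val (per_idx k j) = (j %% m)%N.
Proof. by []. Qed.

Section Profiles.

Variables (R : realType) (n T : nat) (Ai : 'I_n -> finType).
Variable u : 'I_n -> (forall i, Ai i) -> R.
Hypotheses (n_gt0 : (0 < n)%N) (T_gt0 : (0 < T)%N).

Local Notation profile := (forall i, Ai i).

Let nT_gt0 : (0 < n * T)%N. Proof. by rewrite muln_gt0 n_gt0. Qed.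

Definition cyc_ext (a : 'I_(n * T) -> profile) (j : nat) : profile :=
  a (Ordinal (ltn_pmod j nT_gt0)).

Lemma cyc_ext_mod a j : cyc_ext a (j %% (n * T)) = cyc_ext a j.
Proof. by congr a; apply: val_inj; rewrite /= modn_mod. Qed.

Lemma cyc_extD a j : cyc_ext a (j + n * T) = cyc_ext a j.
Proof. by rewrite -cyc_ext_mod modnDr cyc_ext_mod. Qed.

Definition stream (a : 'I_(n * T) -> profile) (i : 'I_n) (j : nat) : R :=
  u i (cyc_ext a (i * T + j)).

Lemma stream_periodic a i j : stream a i (j + n * T) = stream a i j.
Proof. by rewrite /stream addnA cyc_extD. Qed.

Lemma U_entry (d : R) a i :
  U u d a 0 i = (\sum_(k < n * T) d ^+ k * stream a i k) / \sum_(k < n * T) d ^+ k.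
Proof.
rewrite mxE; congr (_ / _); apply: eq_bigr => k _.
by congr (_ * u _ (a _)); apply: val_inj.
Qed.

Definition shift (a : 'I_(n * T) -> profile) (r : nat) : 'I_(n * T) -> profile :=
  fun p => cyc_ext a (p + r).

Lemma U_shift (d : R) a r i :
  U u d (shift a r) 0 i = disc_sum d (n * T) 1 (stream a i) r / \sum_(k < n * T) d ^+ k.
Proof.
rewrite U_entry; congr (_ / _); apply: eq_bigr => k _.
rewrite /stream /shift {1}/cyc_ext /= -cyc_ext_mod modnDml cyc_ext_mod muln1.
by do 3 f_equal; lia.
Qed.

Definition stretch (a : 'I_(n * T) -> profile) (e : nat) : 'I_(n * T.+1) -> profile :=
  fun p => cyc_ext a (e + p %/ T.+1 * T).

Lemma U_stretch (d : R) a e i : 0 < d ->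
  U u d (stretch a e) 0 i =
  disc_sum (d ^+ T.+1) n T (stream a i) e / \sum_(q < n) (d ^+ T.+1) ^+ q.
Proof.
move=> d_gt0; set y := d ^+ T.+1.
have block q r : d ^+ (q * T.+1 + r) = y ^+ q * d ^+ r by rewrite exprD mulnC exprM.
have num : \sum_(k < n * T.+1) d ^+ k * u i (stretch a e (per_idx k (i * T.+1 + k)))
    = (\sum_(r < T.+1) d ^+ r) * disc_sum y n T (stream a i) e.
  under eq_bigr do rewrite /stretch per_idx_val.
  rewrite (sum_ord_mul n T.+1 (fun k =>
    d ^+ k * u i (cyc_ext a (e + ((i * T.+1 + k) %% (n * T.+1)) %/ T.+1 * T)))).
  rewrite /disc_sum mulr_sumr; apply: eq_bigr => q _.
  rewrite mulr_suml; apply: eq_bigr => r /= _.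
  rewrite block [RHS]mulrCA -mulrA /stream; congr (_ * (_ * u i _)).
  rewrite -modn_divl addnA -mulnDl divnMDl // divn_small // addn0 muln_modl.
  by rewrite -cyc_ext_mod modnDmr cyc_ext_mod; congr cyc_ext; lia.
have den : \sum_(k < n * T.+1) d ^+ k = (\sum_(r < T.+1) d ^+ r) * \sum_(q < n) y ^+ q.
  rewrite sum_ord_mul mulr_sumr; apply: eq_bigr => q _.
  by rewrite mulr_suml; apply: eq_bigr => r _; rewrite block mulrC.
rewrite mxE num den; field.
by rewrite !gt_eqF ?sum_expr_gt0 ?exprn_gt0.
Qed.

Lemma U_mem_F_lt_discount (d d' : R) (a : 'I_(n * T) -> profile) :
  0 < d -> d < d' -> d' <= 1 -> F u d T (U u d' a).
Proof.
move=> d_gt0 dd' d'_le1; set c := cyc_diff d (n * T) 1 (fun j => d' ^+ j).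
have by_parts g : (forall j, g (j + n * T)%N = g j) ->
    \sum_(r < n * T) c r * disc_sum d (n * T) 1 g r
    = (1 - d ^+ (n * T)) * \sum_(j < n * T) d' ^+ j * g j.
  by move=> gp; have := @sum_disc_sum_by_parts _ d (n * T) 1 g (fun j => d' ^+ j);
    rewrite muln1; apply.
set Z := \sum_(k < n * T) d ^+ k; set Z' := \sum_(k < n * T) d' ^+ k.
have Z_gt0 : 0 < Z by exact: sum_expr_gt0.
have d'_gt0 : 0 < d' := lt_trans d_gt0 dd'.
have Z'_gt0 : 0 < Z' by exact: sum_expr_gt0.
have sum_c : (\sum_(r < n * T) c r) * Z = (1 - d ^+ (n * T)) * Z'.
  have := by_parts (fun _ => 1) (fun _ => erefl); under eq_bigr do rewrite disc_sum1.
  by rewrite -mulr_suml; under [X in _ = _ * X -> _]eq_bigr do rewrite mulr1.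
have d_lt1 : d < 1 := lt_le_trans dd' d'_le1.
have dnT_lt1 : d ^+ (n * T) < 1 by rewrite exprn_ilt1 ?ltW // -lt0n.
apply: (conv_hull_weights (c := fun r : 'I_(n * T) => c r)
                          (p := fun r => U u d (shift a r))).
- move=> [[|j] /= jlt]; rewrite /c /cyc_diff.
    by rewrite expr0 subr_ge0 mulr_ile1 ?exprn_ge0 ?exprn_ile1
      ?(ltW d_gt0) ?(ltW d'_gt0) ?(ltW d_lt1).
  have -> : (j.+1 + n * T - 1 = j + n * T)%N by lia.
  rewrite modnDr modn_small ?(ltnW jlt) // exprS -mulrBl.
  by rewrite mulr_ge0 ?subr_ge0 ?exprn_ge0 ?ltW.
- by rewrite -(pmulr_lgt0 _ Z_gt0) sum_c mulr_gt0 // subr_gt0.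
- by move=> r; exists (shift a r).
move=> i; under eq_bigr do rewrite U_shift mulrA.
rewrite U_entry -mulr_suml by_parts => [|j]; last exact: stream_periodic.
rewrite -[\sum_(e < n * T) c e](mulfK (lt0r_neq0 Z_gt0)) sum_c.
rewrite -/Z -/Z'; field.
by rewrite !gt_eqF.
Qed.

Lemma U_mem_F_succ (d : R) (a : 'I_(n * T) -> profile) :
  0 < d -> d <= 1 -> F u d T.+1 (U u d a).
Proof.
move=> d_gt0 d_le1; set y := d ^+ T.+1.
set Z := \sum_(k < n * T) d ^+ k; set Y := \sum_(q < n) y ^+ q.
have Z_gt0 : 0 < Z by exact: sum_expr_gt0.
have Y_gt0 : 0 < Y by rewrite sum_expr_gt0 ?exprn_gt0.
have [d1 | d_neq1] := eqVneq d 1.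
  apply: (conv_hull_weights (c := fun _ : 'I_(n * T) => 1)
                            (p := fun e => U u d (stretch a e))).
  - by [].
  - by rewrite sumr_const card_ord ltr0n.
  - by move=> e; exists (stretch a e).
  move=> i; under eq_bigr do rewrite mul1r U_stretch //.
  rewrite -mulr_suml sum_disc_sum => [|j]; last exact: stream_periodic.
  rewrite U_entry -/Y -/Z sumr_const card_ord [Y * _]mulrC mulfK ?lt0r_neq0 // /Z d1.
  under [X in _ = _ * (X / _)]eq_bigr do rewrite expr1n mul1r.
  under [X in _ = _ * (_ / X)]eq_bigr do rewrite expr1n.
  by rewrite sumr_const card_ord mulrC divfK // pnatr_eq0 -lt0n.
have d_lt1 : d < 1 by rewrite lt_neqAle d_neq1.
have yn_lt1 : y ^+ n < 1 by rewrite exprn_ilt1 ?exprn_ge0 ?exprn_ilt1 ?ltW // -lt0n.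
set c := cyc_diff y (n * T) T (fun j => d ^+ j).
have by_parts g : (forall j, g (j + n * T)%N = g j) ->
    \sum_(e < n * T) c e * disc_sum y n T g e = (1 - y ^+ n) * \sum_(j < n * T) d ^+ j * g j.
  exact: sum_disc_sum_by_parts.
have sum_c : (\sum_(e < n * T) c e) * Y = (1 - y ^+ n) * Z.
  have := by_parts (fun _ => 1) (fun _ => erefl); under eq_bigr do rewrite disc_sum1.
  by rewrite -mulr_suml; under [X in _ = _ * X -> _]eq_bigr do rewrite mulr1.
apply: (conv_hull_weights (c := fun e : 'I_(n * T) => c e)
                          (p := fun e => U u d (stretch a e))).
- move=> e; rewrite /c /cyc_diff subr_ge0 /y -exprD ler_wiXn2l ?ltW //.
  case: (ltnP e T) => [eT | Te]; first by rewrite ltnW // ltn_addr // ltnS ltnW.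
  rewrite -addnBAC // modnDr modn_small; first by lia.
  exact: leq_ltn_trans (leq_subr T e) (ltn_ord e).
- by rewrite -(pmulr_lgt0 _ Y_gt0) sum_c mulr_gt0 // subr_gt0.
- by move=> e; exists (stretch a e).
move=> i; under eq_bigr do rewrite U_stretch // mulrA.
rewrite U_entry -mulr_suml by_parts => [|j]; last exact: stream_periodic.
rewrite -[\sum_(e < n * T) c e](mulfK (lt0r_neq0 Y_gt0)) sum_c -/y -/Y -/Z; field.
by rewrite !gt_eqF.
Qed.

End Profiles.

Unset Implicit Arguments.

Theorem theorem2 (R : realType) (n : nat) (hn : (2 <= n)%N)
  (Ai : 'I_n -> finType) (hne : forall i, (0 < #|Ai i|)%N)
  (u : 'I_n -> (forall i, Ai i) -> R) :
  (forall (delta delta' : R) (T : nat), 0 < delta -> delta < delta' ->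
     delta' <= 1 -> (1 <= T)%N ->
     forall x, F u delta' T x -> F u delta T x) /\
  (forall (delta : R) (T : nat), 0 < delta -> delta <= 1 -> (1 <= T)%N ->
     forall x, F u delta T x -> F u delta T.+1 x).
Proof.
have n_gt0 : (0 < n)%N by exact: leq_trans hn.
split=> [d d' T d_gt0 dd' d'_le1 T_gt0 | d T d_gt0 d_le1 T_gt0];
  apply: conv_hull_sub => _ [a ->].
- exact: U_mem_F_lt_discount.
- exact: U_mem_F_succ.
Qed.
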